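(* Let $L \subseteq \Sigma^*$ be regular and $k\ge0$. Then $L$ is a Boolean combination of at most $k$ regular left ideals if and only if $\mathrm{alt}_L(x) \le k$ for all $x \in \Sigma^*$.
   Context: A language $P\subseteq\Sigma^*$ is a left ideal if $\Sigma^*P\subseteq P$. For $x=a_1\cdots a_n\in\Sigma^*$, a position $1\le i\le n$ is an $L$-alternation point if exactly one of the words $a_i\cdots a_n$ and $a_{i+1}\cdots a_n$ belongs to $L$; $\mathrm{alt}_L(x)$ is the number of $L$-alternation points of $x$. *)

From mathcomp Require Import all_boot.
Set Implicit Arguments. Unset Strict Implicit. Unset Printing Implicit Defensive.

Definition lang (Sigma : finType) := seq Sigma -> bool.

Definition regular (Sigma : finType) (L : lang Sigma) : Prop :=
  exists (Q : finType) (q0 : Q) (delta : Q -> Sigma -> Q) (F : pred Q),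
    forall x : seq Sigma, L x = F (foldl delta q0 x).

Definition left_ideal (Sigma : finType) (P : lang Sigma) : Prop :=
  forall u x : seq Sigma, P x -> P (u ++ x).

Definition bool_comb (Sigma : finType) (m : nat) (P : 'I_m -> lang Sigma)
    (L : lang Sigma) : Prop :=
  exists f : ('I_m -> bool) -> bool, forall x : seq Sigma, L x = f (fun i => P i x).

(* alt_L(x): number of positions i (1 <= i <= n) such that exactly one of
   a_i...a_n = drop (i-1) x and a_(i+1)...a_n = drop i x belongs to L. *)
Definition alt (Sigma : finType) (L : lang Sigma) (x : seq Sigma) : nat :=
  \sum_(i < size x) (L (drop i x) != L (drop i.+1 x)).

(** Reading a word from right to left, at every alternation point of
    [L = f(P_0, ..., P_(m-1))] the membership in some [P_i] must change;
    since the [P_i] are left ideals, such a change can only be an entry into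
    [P_i], so there are at most [m] alternation points.  Conversely, if
    [alt_L <= k] everywhere, take [P_i = {x | i < alt_L x}] for [i < k]: these
    are left ideals because [alt_L] can only grow when a prefix is added, and
    [L x] is [L ε] xored with the parity of [alt_L x = #{i | x ∈ P_i}].  Each
    [P_i] is regular: a DFA reading left to right can maintain, for every set
    [h] of final states of a DFA for [L], the number of alternation points of
    the language accepted with final states [h], capped at [i + 1]. *)

From mathcomp Require Import all_boot.
From mathcomp Require Import zify.
From Stdlib Require Import FunctionalExtensionality.
Set Implicit Arguments. Unset Strict Implicit. Unset Printing Implicit Defensive.

Section Alternations.
Variables (Sigma : finType) (L : lang Sigma).

Lemma eq_alt (L' : lang Sigma) : L =1 L' -> alt L =1 alt L'.
Proof. by move=> eqL x; apply: eq_bigr => i _; rewrite !eqL. Qed.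

Lemma alt_nil : alt L [::] = 0.
Proof. by rewrite /alt big_ord0. Qed.

Lemma alt_cons a x : alt L (a :: x) = (L (a :: x) != L x) + alt L x.
Proof. by rewrite /alt /= big_ord_recl /= drop0. Qed.

Lemma alt_rcons x a :
  alt L (rcons x a) = alt (fun y => L (rcons y a)) x + (L [:: a] != L [::]).
Proof.
rewrite /alt size_rcons big_ord_recr /= drop_rcons // drop_size.
rewrite drop_oversize ?size_rcons //; congr (_ + _).
by apply: eq_bigr => i _; rewrite !drop_rcons // ltnW.
Qed.

Lemma alt_parity x : L x = L [::] (+) odd (alt L x).
Proof.
elim: x => [|a x IH]; first by rewrite alt_nil addbF.
rewrite alt_cons oddD IH.
by case: (L (a :: x)); case: (L [::]); case: (odd (alt L x)).
Qed.

Lemma leq_alt_cat u x : alt L x <= alt L (u ++ x).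
Proof. by elim: u => [|a u IH] //=; rewrite alt_cons (leq_trans IH) ?leq_addl. Qed.

End Alternations.

Section LeftIdealCombination.
Variables (Sigma : finType) (m : nat) (P : 'I_m -> lang Sigma) (L : lang Sigma).
Hypotheses (idealP : forall i, left_ideal (P i)) (combL : bool_comb P L).

Lemma left_ideal_cons i a x : P i x -> P i (a :: x).
Proof. exact: idealP i [:: a] x. Qed.

Lemma count_left_ideals_cons a x :
  (L (a :: x) != L x) + \sum_(i < m) P i x <= \sum_(i < m) P i (a :: x).
Proof.
have leq_cons j : P j x <= P j (a :: x).
  by case: (P j x) (@left_ideal_cons j a x) => // ->.
have [altx | /negPn _] := boolP (L (a :: x) != L x); last first.
  by apply: leq_sum => j _; apply: leq_cons.
have [i flip_i] : exists i, P i x != P i (a :: x).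
  apply/existsP; apply: contraR altx => /existsPn same.
  have [f combLf] := combL; rewrite !combLf; apply/eqP; congr f.
  by apply: functional_extensionality => i; move/negPn/eqP: (same i).
have [notPi Pi_cons] : P i x = false /\ P i (a :: x).
  move: flip_i (@left_ideal_cons i a x).
  by case: (P i x); case: (P i (a :: x)) => // _ /(_ isT).
rewrite (bigD1 i) // [X in _ <= X](bigD1 i) //= Pi_cons notPi add0n leq_add2l.
by apply: leq_sum => j _; apply: leq_cons.
Qed.

Lemma alt_le_count_left_ideals x : alt L x <= \sum_(i < m) P i x.
Proof.
elim: x => [|a x IH]; first by rewrite alt_nil.
by rewrite alt_cons (leq_trans _ (count_left_ideals_cons a x)) // leq_add2l.
Qed.

Lemma alt_le_card x : alt L x <= m.
Proof.
apply: leq_trans (alt_le_count_left_ideals x) _.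
rewrite -[X in _ <= X]card_ord -sum1_card.
by apply: leq_sum => i _; apply: leq_b1.
Qed.

End LeftIdealCombination.

Section CappedAlternationAutomaton.
Variables (Sigma Q : finType) (q0 : Q) (delta : Q -> Sigma -> Q) (n : nat).

Definition dfa_lang (h : {ffun Q -> bool}) : lang Sigma :=
  fun x => h (foldl delta q0 x).

Definition alt_state := {ffun {ffun Q -> bool} -> 'I_n.+1}.

Definition alt_start : alt_state := [ffun => inord 0].

Definition alt_step (s : alt_state) (a : Sigma) : alt_state :=
  [ffun h : {ffun Q -> bool} => inord (minn n (s [ffun q => h (delta q a)] + (h (delta q0 a) != h q0)))].

Lemma alt_dfa_lang_rcons h x a :
  alt (dfa_lang h) (rcons x a)
  = alt (dfa_lang [ffun q => h (delta q a)]) x + (h (delta q0 a) != h q0).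
Proof.
rewrite alt_rcons; congr (_ + _).
by apply: eq_alt => y; rewrite /dfa_lang foldl_rcons ffunE.
Qed.

Lemma foldl_alt_step x h :
  foldl alt_step alt_start x h = inord (minn n (alt (dfa_lang h) x)).
Proof.
elim/last_ind: x h => [|x a IH] h; first by rewrite ffunE alt_nil minn0.
rewrite foldl_rcons ffunE IH alt_dfa_lang_rcons inordK; last by rewrite ltnS geq_minl.
by congr inord; lia.
Qed.

End CappedAlternationAutomaton.

Lemma regular_alt_gt (Sigma : finType) (L : lang Sigma) n :
  regular L -> regular (fun x => n < alt L x).
Proof.
move=> [Q [q0 [delta [F accL]]]].
exists (alt_state Q n.+1), (alt_start Q n.+1), (alt_step q0 delta (n := n.+1)).
exists (fun s : alt_state Q n.+1 => n < s [ffun q => F q]) => x.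
rewrite foldl_alt_step inordK ?ltnS ?geq_minl // leq_min ltnSn /=.
by congr (_ < _); apply: eq_alt => y; rewrite /dfa_lang ffunE accL.
Qed.

Lemma left_ideal_alt_gt (Sigma : finType) (L : lang Sigma) n :
  left_ideal (fun x => n < alt L x).
Proof. by move=> u x /leq_trans; apply; apply: leq_alt_cat. Qed.

Lemma sum_ord_ltn n k : \sum_(i < k) (i < n : nat) = minn n k.
Proof.
elim: k => [|k IH]; first by rewrite big_ord0 minn0.
by rewrite big_ord_recr /= IH; case: ltnP => ?; lia.
Qed.

Lemma bool_comb_alt_gt (Sigma : finType) (L : lang Sigma) k :
  (forall x, alt L x <= k) ->
  bool_comb (fun (i : 'I_k) x => i < alt L x) L.
Proof.
move=> altk; exists (fun v => L [::] (+) odd (\sum_(i < k) v i)) => x.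
by rewrite sum_ord_ltn (minn_idPl (altk x)) -alt_parity.
Qed.

Theorem lemma5p12 (Sigma : finType) (L : lang Sigma) (k : nat) :
  regular L ->
  ((exists m : nat, m <= k /\
      exists P : 'I_m -> lang Sigma,
        (forall i, regular (P i) /\ left_ideal (P i)) /\ bool_comb P L)
   <-> (forall x : seq Sigma, alt L x <= k)).
Proof.
move=> regL; split.
  move=> [m [le_mk [P [regP combL]]]] x.
  by apply: leq_trans le_mk; apply: alt_le_card combL x => i; case: (regP i).
move=> altk; exists k; split => //.
exists (fun (i : 'I_k) x => i < alt L x); split; last exact: bool_comb_alt_gt.
by move=> i; split; [apply: regular_alt_gt | apply: left_ideal_alt_gt].
Qed.
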